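(* Let $N\ge 2$, let $e_{ij}\ge 0$ ($1\le i,j\le N$) be nonnegative similarity weights, let $a\in\{0,1\}^N$ be a treatment assignment, and let $y_1,\dots,y_N\in[0,1]$. Write $d_i=\sum_j e_{ij}$, $d_{\min}=\min_i d_i$, $e_{\mathrm{sum}}=\sum_{i,j}e_{ij}$, and $d_i(\mathrm{cut})=\sum_j \mathbb{1}(a_i\neq a_j)e_{ij}$, and assume $d_i(\mathrm{cut})>0$ for every $i$ (so that $d_i>0$ and $d_{\min}>0$). Define the counterfactual imputation weights $w_{ij}=\frac{\mathbb{1}(a_i\neq a_j)e_{ij}}{\sum_k \mathbb{1}(a_i\neq a_k)e_{ik}}$ and the oracle residuals $\epsilon_i=\left|y_i-\frac{\sum_j e_{ij}y_j}{d_i}\right|$. Then $$\sum_{i=1}^N\Big|\sum_{j} w_{ij}y_j-y_i\Big|\;\le\;\sum_{i=1}^N\epsilon_i+\frac{e_{\mathrm{sum}}-\sum_{i,j}\mathbb{1}(a_i\neq a_j)e_{ij}}{d_{\min}},$$ where all sums over $i,j$ range over ordered pairs in $\{1,\dots,N\}^2$.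
   Context: Units $i=1,\dots,N$ have covariates with pairwise similarities $e_{ij}$; $a_i=1$ denotes treatment and $a_i=0$ control. The quantity $\sum_j w_{ij}y_j$ is the estimate of unit $i$'s unobserved potential outcome obtained as a similarity-weighted average of the outcomes of units in the opposite treatment group. *)

From mathcomp Require Import all_boot all_order all_algebra.
Set Implicit Arguments. Unset Strict Implicit. Unset Printing Implicit Defensive.
Import Order.TTheory GRing.Theory Num.Theory.
Local Open Scope ring_scope.

Section Defs.
Variables (R : realFieldType) (N : nat).
Variables (e : 'I_N -> 'I_N -> R) (a : 'I_N -> bool) (y : 'I_N -> R).

Definition ind (i j : 'I_N) : R := if a i != a j then 1 else 0.
Definition deg (i : 'I_N) : R := \sum_(j < N) e i j.
(* d_min = min_i d_i  (seeded with the first degree; N >= 1 makes the seed irrelevant) *)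
Definition dmin : R :=
  \big[Num.min/ head 0 [seq deg i | i <- enum 'I_N]]_(i < N) deg i.
Definition esum : R := \sum_(i < N) \sum_(j < N) e i j.
Definition dcut (i : 'I_N) : R := \sum_(j < N) ind i j * e i j.
Definition ecut : R := \sum_(i < N) \sum_(j < N) ind i j * e i j.
Definition w (i j : 'I_N) : R := ind i j * e i j / dcut i.
Definition eps (i : 'I_N) : R := `| y i - (\sum_(j < N) e i j * y j) / deg i |.
End Defs.

From mathcomp Require Import all_boot all_order all_algebra.
From mathcomp Require Import ring lra.
Import Order.TTheory GRing.Theory Num.Theory.
Local Open Scope ring_scope.

(* Fix a unit i and write m_i = sum_j w_ij y_j for its imputed
   counterfactual, a weighted average of the y_j with weights c_j = 1(a_i<>a_j) e_ij;
   hence m_i lies in [0,1] and sum_j c_j (m_i - y_j) = 0.  By the triangle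
   inequality |m_i - y_i| <= eps_i + |m_i - (sum_j e_ij y_j)/d_i|, and
     d_i m_i - sum_j e_ij y_j = sum_j e_ij (m_i - y_j) = sum_j (e_ij - c_j)(m_i - y_j),
   whose modulus is at most sum_j (e_ij - c_j) = d_i - d_i(cut) since every
   |m_i - y_j| <= 1.  Dividing by d_i >= d_min gives the per-unit bound
     |m_i - y_i| <= eps_i + (d_i - d_i(cut)) / d_min,
   and summing over i yields the theorem, because sum_i (d_i - d_i(cut)) = e_sum - e_cut. *)

Section WeightedAverage.
Variables (R : realFieldType) (I : finType).

Lemma wavg_in01 (c y : I -> R) :
  (forall j, 0 <= c j) -> 0 < \sum_j c j -> (forall j, 0 <= y j <= 1) ->
  0 <= (\sum_j c j * y j) / \sum_j c j <= 1.
Proof.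
move=> c_ge0 csum_gt0 y01; apply/andP; split.
  apply: divr_ge0; last exact: ltW.
  by apply: sumr_ge0 => j _; have /andP[y0 _] := y01 j; rewrite mulr_ge0.
rewrite ler_pdivrMr // mul1r; apply: ler_sum => j _.
by have /andP[_ y1] := y01 j; rewrite ler_piMr.
Qed.

Lemma wavg_balance (c y : I -> R) : 0 < \sum_j c j ->
  \sum_j c j * ((\sum_k c k * y k) / \sum_k c k - y j) = 0.
Proof.
move=> csum_gt0; under eq_bigr do rewrite mulrBr.
by rewrite sumrB -mulr_suml mulrC divfK ?subrr // lt0r_neq0.
Qed.

Lemma deviation_le_missing_mass (e c y : I -> R) (m : R) :
  (forall j, 0 <= c j <= e j) -> (forall j, 0 <= y j <= 1) -> 0 <= m <= 1 ->
  \sum_j c j * (m - y j) = 0 ->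
  `|\sum_j e j * (m - y j)| <= \sum_j (e j - c j).
Proof.
move=> ce y01 m01 balance.
have -> : \sum_j e j * (m - y j) = \sum_j (e j - c j) * (m - y j).
  by under [RHS]eq_bigr do rewrite mulrBl; rewrite sumrB balance subr0.
apply: le_trans (ler_norm_sum _ _ _) _; apply: ler_sum => j _.
have /andP[c0 cle] := ce j; have ec_ge0 : 0 <= e j - c j by rewrite subr_ge0.
rewrite normrM (ger0_norm ec_ge0) ler_piMr //.
have /andP[y0 y1] := y01 j; have /andP[m0 m1] := m01.
by rewrite ler_norml; apply/andP; split; lra.
Qed.

End WeightedAverage.

Section PerUnit.
Variables (R : realFieldType) (N : nat).
Variables (e : 'I_N -> 'I_N -> R) (a : 'I_N -> bool) (y : 'I_N -> R).
Hypothesis e_ge0 : forall i j, 0 <= e i j.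
Hypothesis y01 : forall i, 0 <= y i <= 1.
Hypothesis dcut_gt0 : forall i, 0 < dcut e a i.

Definition imputed (i : 'I_N) : R := \sum_(j < N) w e a i j * y j.

Lemma ind01 (i j : 'I_N) : 0 <= ind R a i j <= 1.
Proof. by rewrite /ind; case: ifP; rewrite ?ler01 ?lexx. Qed.

Lemma cut_weight_bounds (i j : 'I_N) : 0 <= ind R a i j * e i j <= e i j.
Proof.
have /andP[ind0 ind1] := ind01 i j.
by rewrite mulr_ge0 //= ler_piMl.
Qed.

Lemma dcut_le_deg (i : 'I_N) : dcut e a i <= deg e i.
Proof. by apply: ler_sum => j _; have /andP[] := cut_weight_bounds i j. Qed.

Lemma deg_gt0 (i : 'I_N) : 0 < deg e i.
Proof. exact: lt_le_trans (dcut_gt0 i) (dcut_le_deg i). Qed.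

Lemma dmin_le_deg (i : 'I_N) : dmin e <= deg e i.
Proof. by rewrite /dmin (bigD1 i) //= ge_min lexx. Qed.

(* With at least one unit, d_min is one of the (positive) degrees. *)
Lemma dmin_gt0 : (0 < N)%N -> 0 < dmin e.
Proof.
move=> N_gt0; rewrite /dmin; apply: (big_ind (fun x => 0 < x)).
- case E: (enum 'I_N) => [|i0 s] /=; last exact: deg_gt0.
  by move: (size_enum_ord N); rewrite E => N0; rewrite -N0 in N_gt0.
- by move=> x z x_gt0 z_gt0; rewrite /Num.min; case: ifP.
- by move=> i _; exact: deg_gt0.
Qed.

Lemma imputedE (i : 'I_N) :
  imputed i = (\sum_(j < N) ind R a i j * e i j * y j) / dcut e a i.
Proof.
rewrite /imputed mulr_suml; apply: eq_bigr => j _.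
by rewrite /w -!mulrA [_^-1 * y j]mulrC.
Qed.

Lemma imputation_error_le (i : 'I_N) : (0 < N)%N ->
  `|imputed i - y i| <= eps e y i + (deg e i - dcut e a i) / dmin e.
Proof.
move=> N_gt0; set m := imputed i; set A := \sum_(j < N) e i j * y j.
have d_gt0 := deg_gt0 i.
have m01 : 0 <= m <= 1.
  have := dcut_gt0 i; rewrite /dcut => cut_gt0.
  rewrite /m imputedE; apply: (@wavg_in01 _ _ (fun j => ind R a i j * e i j)) => // j.
  by have /andP[] := cut_weight_bounds i j.
have balance : \sum_(j < N) ind R a i j * e i j * (m - y j) = 0.
  by rewrite /m imputedE; apply: wavg_balance; exact: dcut_gt0.
have gap : `|deg e i * m - A| <= deg e i - dcut e a i.
  have -> : deg e i * m - A = \sum_(j < N) e i j * (m - y j).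
    by rewrite /deg /A mulr_suml -sumrB; apply: eq_bigr => j _; rewrite mulrBr.
  rewrite /deg /dcut -sumrB.
  exact: deviation_le_missing_mass (fun j => cut_weight_bounds i j) y01 m01 balance.
have triangle : `|m - y i| <= eps e y i + `|m - A / deg e i|.
  have -> : m - y i = (A / deg e i - y i) + (m - A / deg e i) by ring.
  by apply: le_trans (ler_normD _ _) _; rewrite /eps -/A distrC.
apply: le_trans triangle _; rewrite lerD2l.
have -> : m - A / deg e i = (deg e i * m - A) / deg e i by field; exact: lt0r_neq0.
rewrite normrM [`|_^-1|]ger0_norm; last by rewrite invr_ge0 ltW.
apply: (@le_trans _ _ ((deg e i - dcut e a i) / deg e i)).
  by rewrite ler_wpM2r // invr_ge0 ltW.
rewrite ler_wpM2l ?subr_ge0 ?dcut_le_deg //.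
by rewrite lef_pV2 ?posrE ?dmin_gt0 ?dmin_le_deg.
Qed.

Lemma sum_missing_mass :
  \sum_(i < N) (deg e i - dcut e a i) = esum e - ecut e a.
Proof. by rewrite sumrB. Qed.

End PerUnit.

Theorem proposition2 (R : realFieldType) (N : nat) (hN : (2 <= N)%N)
    (e : 'I_N -> 'I_N -> R) (a : 'I_N -> bool) (y : 'I_N -> R)
    (he : forall i j, 0 <= e i j)
    (hy : forall i, 0 <= y i <= 1)
    (hcut : forall i, 0 < dcut e a i) :
  \sum_(i < N) `| \sum_(j < N) w e a i j * y j - y i |
    <= \sum_(i < N) eps e y i + (esum e - ecut e a) / dmin e.
Proof.
have N_gt0 : (0 < N)%N by apply: leq_trans hN.
apply: (@le_trans _ _
  (\sum_(i < N) (eps e y i + (deg e i - dcut e a i) / dmin e))).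
  by apply: ler_sum => i _; exact: (@imputation_error_le R N e a y he hy hcut i N_gt0).
by rewrite big_split /= -mulr_suml sum_missing_mass.
Qed.
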